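(* Let $q\ge3$ be an integer. Let $H_1,H_2$ be groups with $\mathcal{W}(H_1,\gamma_{q-1}(H_1),\gamma_q(H_1))\ne0$ and $\mathrm{W}(H_2,\gamma_{q-1}(H_2))\ne0$. Let $G$ be a group containing subgroups isomorphic to $H_1$ and to $H_2$ which are both retracts of $G$. Then $\mathcal{W}(G,\gamma_{q-1}(G),\gamma_q(G))\ne0$ and $\mathrm{W}(G,\gamma_{q-1}(G))\ne0$.
   Context: $\gamma_1(H)=H$, $\gamma_{k+1}(H)=[H,\gamma_k(H)]$. A subgroup $H\leqslant G$ is a retract if there is a homomorphism $\alpha\colon G\to G$ with $\alpha(G)=H$ and $\alpha|_H=\mathrm{id}_H$. For normal subgroups $L\geqslant N$ of a group $G$: $\mathrm{Q}(N)^G$ homogeneous quasimorphisms on $N$ invariant under $G$-conjugation, $\mathrm{H}^1(N)^G$ $G$-invariant homomorphisms $N\to\mathbb{R}$, $\mathcal{W}(G,L,N)=\mathrm{Q}(N)^G/(\mathrm{H}^1(N)^G+\{\psi|_N:\psi\in\mathrm{Q}(L)^G\})$, $\mathrm{W}(G,N)=\mathcal{W}(G,G,N)$. *)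

From Stdlib Require Import Reals ZArith.
Open Scope R_scope.

Record Group : Type := {
  carrier :> Type;
  gmul : carrier -> carrier -> carrier;
  ginv : carrier -> carrier;
  gone : carrier;
  gmul_assoc : forall x y z, gmul x (gmul y z) = gmul (gmul x y) z;
  gmul_1l : forall x, gmul gone x = x;
  gmul_1r : forall x, gmul x gone = x;
  gmul_Vl : forall x, gmul (ginv x) x = gone;
  gmul_Vr : forall x, gmul x (ginv x) = gone
}.

Arguments gmul {g}. Arguments ginv {g}. Arguments gone {g}.

Definition is_subgroup (G : Group) (S : G -> Prop) : Prop :=
  S gone /\ (forall x y, S x -> S y -> S (gmul x y)) /\ (forall x, S x -> S (ginv x)).

Definition gen (G : Group) (A : G -> Prop) : G -> Prop :=
  fun x => forall S, is_subgroup G S -> (forall a, A a -> S a) -> S x.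

Definition commg {G : Group} (x y : G) : G := gmul (gmul (ginv x) (ginv y)) (gmul x y).

Definition commsub (G : Group) (A B : G -> Prop) : G -> Prop :=
  gen G (fun z => exists a b, A a /\ B b /\ z = commg a b).

(* lcs_aux G n = gamma_{n+1}(G). *)
Fixpoint lcs_aux (G : Group) (n : nat) : G -> Prop :=
  match n with
  | O => fun _ => True
  | S m => commsub G (fun _ => True) (lcs_aux G m)
  end.

Definition gamma (G : Group) (k : nat) : G -> Prop := lcs_aux G (k - 1).

Fixpoint gpow {G : Group} (x : G) (n : nat) : G :=
  match n with O => gone | S m => gmul x (gpow x m) end.

Definition gzpow {G : Group} (x : G) (z : Z) : G :=
  match z with
  | Z0 => gone
  | Zpos p => gpow x (Pos.to_nat p)
  | Zneg p => ginv (gpow x (Pos.to_nat p))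
  end.

(* phi : G -> R, only its values on N matter. *)
Definition homog_quasimorphism (G : Group) (N : G -> Prop) (phi : G -> R) : Prop :=
  (exists D : R, forall x y, N x -> N y ->
       Rabs (phi (gmul x y) - phi x - phi y) <= D) /\
  (forall x (n : Z), N x -> phi (gzpow x n) = IZR n * phi x).

Definition hom_to_R (G : Group) (N : G -> Prop) (phi : G -> R) : Prop :=
  forall x y, N x -> N y -> phi (gmul x y) = phi x + phi y.

Definition G_invariant (G : Group) (N : G -> Prop) (phi : G -> R) : Prop :=
  forall g x, N x -> phi (gmul (gmul g x) (ginv g)) = phi x.

(* W(G, L, N) <> 0 : some element of Q(N)^G is not in H^1(N)^G + Q(L)^G|_N. *)
Definition calW_nonzero (G : Group) (L N : G -> Prop) : Prop :=
  exists phi : G -> R,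
    homog_quasimorphism G N phi /\ G_invariant G N phi /\
    ~ (exists h psi : G -> R,
          hom_to_R G N h /\ G_invariant G N h /\
          homog_quasimorphism G L psi /\ G_invariant G L psi /\
          forall x, N x -> phi x = h x + psi x).

Definition W_nonzero (G : Group) (N : G -> Prop) : Prop :=
  calW_nonzero G (fun _ => True) N.

Definition is_hom (G H : Group) (f : G -> H) : Prop :=
  forall x y, f (gmul x y) = gmul (f x) (f y).

Definition is_retract (G : Group) (K : G -> Prop) : Prop :=
  exists alpha : G -> G, is_hom G G alpha /\
    (forall k, K k <-> exists g, alpha g = k) /\
    (forall k, K k -> alpha k = k).

Definition subgroup_iso_to (H G : Group) (K : G -> Prop) : Prop :=
  is_subgroup G K /\
  exists f : H -> G, is_hom H G f /\ (forall x y, f x = f y -> x = y) /\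
    (forall g, K g <-> exists h, f h = g).

From Stdlib Require Import Reals ClassicalEpsilon.

(** A retract [K] of [G] isomorphic to [H] yields homomorphisms [f : H -> G]
    and [r : G -> H] with [r ∘ f = id]. Homomorphisms map [gamma_k] into
    [gamma_k], so an [H]-invariant homogeneous quasimorphism [phi] on
    [gamma_q(H)] pulls back along [r] to a [G]-invariant one on [gamma_q(G)].
    If [phi ∘ r] split as a homomorphism plus the restriction of a
    quasimorphism on [gamma_(q-1)(G)], composing that splitting with [f] would
    split [phi] itself, as [r ∘ f = id]. The same argument with [gamma_(q-1)]
    in place of [gamma_q] and [G] in place of [gamma_(q-1)] gives the second
    claim. *)

Lemma gmul_cancel_l {G : Group} (x y z : G) : gmul x y = gmul x z -> y = z.
Proof.
  intros E.
  rewrite <- (gmul_1l G y), <- (gmul_1l G z), <- (gmul_Vl G x), <- !gmul_assoc, E.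
  reflexivity.
Qed.

Section Homomorphism.

Context {A B : Group} {u : A -> B} (u_hom : is_hom A B u).

Lemma hom_one : u gone = gone.
Proof.
  apply (gmul_cancel_l (u gone)).
  rewrite <- u_hom, !gmul_1r.
  reflexivity.
Qed.

Lemma hom_inv (x : A) : u (ginv x) = ginv (u x).
Proof.
  apply (gmul_cancel_l (u x)).
  rewrite <- u_hom, !gmul_Vr.
  exact hom_one.
Qed.

Lemma hom_gpow (x : A) (n : nat) : u (gpow x n) = gpow (u x) n.
Proof.
  induction n as [|n IHn]; simpl.
  - exact hom_one.
  - rewrite u_hom, IHn. reflexivity.
Qed.

Lemma hom_gzpow (x : A) (n : Z) : u (gzpow x n) = gzpow (u x) n.
Proof.
  destruct n; simpl.
  - exact hom_one.
  - apply hom_gpow.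
  - rewrite hom_inv, hom_gpow. reflexivity.
Qed.

Lemma hom_commg (x y : A) : u (commg x y) = commg (u x) (u y).
Proof. unfold commg. rewrite !u_hom, !hom_inv. reflexivity. Qed.

Lemma is_subgroup_preimage (S : B -> Prop) :
  is_subgroup B S -> is_subgroup A (fun x => S (u x)).
Proof.
  intros [S1 [SM SV]]. split; [|split].
  - rewrite hom_one. exact S1.
  - intros x y Hx Hy. rewrite u_hom. apply SM; assumption.
  - intros x Hx. rewrite hom_inv. apply SV; assumption.
Qed.

Lemma hom_gen {X : A -> Prop} {Y : B -> Prop} :
  (forall x, X x -> gen B Y (u x)) -> forall x, gen A X x -> gen B Y (u x).
Proof.
  intros HXY x Hx S HS HYS.
  apply (Hx (fun a => S (u a))).
  - apply is_subgroup_preimage; exact HS.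
  - intros a Ha. exact (HXY a Ha S HS HYS).
Qed.

Lemma hom_commsub {X Y : A -> Prop} {X' Y' : B -> Prop} :
  (forall a, X a -> X' (u a)) -> (forall b, Y b -> Y' (u b)) ->
  forall x, commsub A X Y x -> commsub B X' Y' (u x).
Proof.
  intros HX HY. apply hom_gen.
  intros z [a [b [Ha [Hb ->]]]] S _ HS.
  apply HS. exists (u a), (u b).
  split; [|split]; auto using hom_commg.
Qed.

Lemma hom_lcs_aux (n : nat) (x : A) : lcs_aux A n x -> lcs_aux B n (u x).
Proof.
  revert x; induction n as [|n IHn]; simpl; intros x Hx.
  - exact I.
  - exact (hom_commsub (fun _ _ => I) IHn x Hx).
Qed.

Lemma hom_gamma (k : nat) (x : A) : gamma A k x -> gamma B k (u x).
Proof. apply hom_lcs_aux. Qed.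

End Homomorphism.

Section Pullback.

Context {G H : Group} {r : G -> H} {N : G -> Prop} {M : H -> Prop} {phi : H -> R}.
Context (r_hom : is_hom G H r) (r_N : forall x, N x -> M (r x)).

Lemma homog_quasimorphism_comp :
  homog_quasimorphism H M phi -> homog_quasimorphism G N (fun x => phi (r x)).
Proof.
  intros [[D HD] Hpow]. split.
  - exists D. intros x y Hx Hy. rewrite r_hom. auto.
  - intros x n Hx. rewrite (hom_gzpow r_hom). auto.
Qed.

Lemma hom_to_R_comp : hom_to_R H M phi -> hom_to_R G N (fun x => phi (r x)).
Proof. intros Hphi x y Hx Hy. rewrite r_hom. auto. Qed.

Lemma G_invariant_comp : G_invariant H M phi -> G_invariant G N (fun x => phi (r x)).
Proof. intros Hphi g x Hx. rewrite !r_hom, (hom_inv r_hom). auto. Qed.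

End Pullback.

Lemma calW_nonzero_retraction {H G : Group} {f : H -> G} {r : G -> H}
    {LH NH : H -> Prop} {LG NG : G -> Prop} :
  is_hom H G f -> is_hom G H r -> (forall h, r (f h) = h) ->
  (forall x, LH x -> LG (f x)) -> (forall x, NH x -> NG (f x)) ->
  (forall x, NG x -> NH (r x)) ->
  calW_nonzero H LH NH -> calW_nonzero G LG NG.
Proof.
  intros Hf Hr Hrf fL fN rN [phi [Qphi [Iphi Hnot]]].
  exists (fun g => phi (r g)).
  split; [|split].
  - exact (homog_quasimorphism_comp Hr rN Qphi).
  - exact (G_invariant_comp Hr rN Iphi).
  - intros [h [psi [Hh [Ih [Qpsi [Ipsi Hdec]]]]]].
    apply Hnot. exists (fun y => h (f y)), (fun y => psi (f y)).
    split; [|split; [|split; [|split]]].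
    + exact (hom_to_R_comp Hf fN Hh).
    + exact (G_invariant_comp Hf fN Ih).
    + exact (homog_quasimorphism_comp Hf fL Qpsi).
    + exact (G_invariant_comp Hf fL Ipsi).
    + intros x Hx. rewrite <- Hdec by auto. rewrite Hrf. reflexivity.
Qed.

Lemma retract_iso_retraction {H G : Group} {K : G -> Prop} :
  subgroup_iso_to H G K -> is_retract G K ->
  exists (f : H -> G) (r : G -> H), is_hom H G f /\ is_hom G H r /\ forall h, r (f h) = h.
Proof.
  intros [_ [f [Hf [Hinj HK]]]] [alpha [Halpha [Himg Hfix]]].
  assert (preimage : forall g, {h | f h = alpha g}).
  { intro g. apply constructive_indefinite_description, HK, Himg. exists g. reflexivity. }
  exists f, (fun g => proj1_sig (preimage g)).
  split; [|split].
  - exact Hf.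
  - intros x y. apply Hinj. rewrite Hf, !(proj2_sig (preimage _)). apply Halpha.
  - intros h. apply Hinj. rewrite (proj2_sig (preimage _)). apply Hfix, HK. exists h. reflexivity.
Qed.

Theorem proposition11p22 (q : nat) (H1 H2 G : Group) :
  (3 <= q)%nat ->
  calW_nonzero H1 (gamma H1 (q - 1)) (gamma H1 q) ->
  W_nonzero H2 (gamma H2 (q - 1)) ->
  (exists K1 : G -> Prop, subgroup_iso_to H1 G K1 /\ is_retract G K1) ->
  (exists K2 : G -> Prop, subgroup_iso_to H2 G K2 /\ is_retract G K2) ->
  calW_nonzero G (gamma G (q - 1)) (gamma G q) /\ W_nonzero G (gamma G (q - 1)).
Proof.
  (* The transfer along a retraction works for every q. *)
  intros _ W1 W2 [K1 [iso1 ret1]] [K2 [iso2 ret2]].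
  destruct (retract_iso_retraction iso1 ret1) as [f1 [r1 [Hf1 [Hr1 Hr1f1]]]].
  destruct (retract_iso_retraction iso2 ret2) as [f2 [r2 [Hf2 [Hr2 Hr2f2]]]].
  split.
  - apply (calW_nonzero_retraction Hf1 Hr1 Hr1f1 (hom_gamma Hf1 (q - 1))
             (hom_gamma Hf1 q) (hom_gamma Hr1 q) W1).
  - apply (calW_nonzero_retraction Hf2 Hr2 Hr2f2 (fun _ _ => I)
             (hom_gamma Hf2 (q - 1)) (hom_gamma Hr2 (q - 1)) W2).
Qed.
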